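(* For every $0<\alpha<10^{-5}$ there exists $m_0$ such that for all $m\ge m_0$ the following holds. Suppose $H$ is a $3$-graph on $V=A\cup B$ where $A,B$ are disjoint with $|A|=|B|=6m$, and every vertex of $H$ is $\alpha$-good in $H$ with respect to $\mathcal B[A,B]$. Then $H$ contains a $K_4^-$-factor.
   Context: $K_4^-$ is the $3$-graph with $4$ vertices and $3$ edges; a $K_4^-$-factor is a set of vertex-disjoint (not necessarily induced) copies covering all vertices. For disjoint $A,B$, $\mathcal B[A,B]$ is the $3$-graph on $A\cup B$ whose edges are all triples containing an odd number of vertices of $A$. For $3$-graphs $H,H'$ on the same vertex set $V$ with $|V|=n$, a vertex $v$ is $\alpha$-good in $H$ with respect to $H'$ if the number of edges of $H'$ containing $v$ that are not edges of $H$ is at most $\alpha n^2$. *)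

From HB Require Import structures.
From mathcomp Require Import all_boot all_order all_algebra.
Set Implicit Arguments. Unset Strict Implicit. Unset Printing Implicit Defensive.
Import Order.TTheory GRing.Theory Num.Theory.

Definition is_3graph (V : finType) (H : {set {set V}}) : bool :=
  [forall e in H, #|e| == 3].

Definition BAB (V : finType) (A B : {set V}) : {set {set V}} :=
  [set e : {set V} | [&& e \subset A :|: B, #|e| == 3 & odd #|e :&: A|]].

Definition alpha_good (R : realFieldType) (alpha : R) (V : finType)
    (H H' : {set {set V}}) (v : V) : Prop :=
  (#|[set e in H' | (v \in e) && (e \notin H)]|%:R <= alpha * (#|V| ^ 2)%:R)%R.

(* S spans a (not necessarily induced) copy of K4^- in H: |S| = 4 and
   at least 3 of the triples inside S are edges of H (any 3 of the 4 triples
   of a 4-set form a K4^-). *)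
Definition spans_K4minus (V : finType) (H : {set {set V}}) (S : {set V}) : bool :=
  (#|S| == 4) && (3 <= #|[set e in H | e \subset S]|).

Definition has_K4minus_factor (V : finType) (H : {set {set V}}) : Prop :=
  exists P : {set {set V}}, partition P [set: V] /\ {in P, forall S, spans_K4minus H S}.

From HB Require Import structures.
From mathcomp Require Import all_boot all_order all_algebra zify.
Set Implicit Arguments. Unset Strict Implicit. Unset Printing Implicit Defensive.
Import Order.TTheory GRing.Theory Num.Theory.

(* Write m for |A|/6.  The triples of B[A,B] through a pair {u, w} lying on one
   side and an apex a in A are almost all edges of H, so almost every such pair is
   good: all but m/4 apexes of A complete it to an edge.  On each side the good
   pairs form a graph of co-degree at most m/4, which therefore has a triangle
   factor.  Fix one of B; all but 3m vertices x of A are cones (x |: T contains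
   three edges, i.e. spans a K4^-) over all but m of its 2m triangles.  Set aside
   3m such vertices X, split the rest of A into m triangles as well, and match X
   perfectly with the 3m triangles by a degree-condition version of Hall's
   theorem. *)

Lemma subset_of_card (T : finType) (A : {set T}) n :
  n <= #|A| -> exists2 B : {set T}, B \subset A & #|B| = n.
Proof.
move=> /card_geqP [s [us ss sA]]; exists [set x in s].
  by apply/subsetP => x; rewrite inE => /sA.
by rewrite cardsE (card_uniqP us).
Qed.

Lemma leq_card_bigcup (I T : finType) (P : pred I) (F : I -> {set T}) :
  #|\bigcup_(i | P i) F i| <= \sum_(i | P i) #|F i|.
Proof.
elim/big_rec2: _ => [|i n U _ le]; first by rewrite cards0.
by rewrite (leq_trans (leq_card_setU _ _)) ?leq_add.
Qed.

Lemma card_sigma (T1 T2 : finType) (X : {set T1}) (F : T1 -> {set T2}) :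
  #|[set p : T1 * T2 | (p.1 \in X) && (p.2 \in F p.1)]| = \sum_(x in X) #|F x|.
Proof.
rewrite -sum1dep_card.
rewrite -(pair_big_dep (mem X) (fun x => mem (F x)) (fun _ _ => 1)) /=.
by apply: eq_bigr => x _; rewrite sum1_card.
Qed.

Lemma sum_card_exchange (T1 T2 : finType) (X : {set T1}) (Y : {set T2})
    (r : T1 -> T2 -> bool) :
  \sum_(x in X) #|[set y in Y | r x y]| = \sum_(y in Y) #|[set x in X | r x y]|.
Proof.
have card_sum (T : finType) (Z : {set T}) (p : pred T) :
    #|[set z in Z | p z]| = \sum_(z in Z) p z.
  rewrite -sum1_card big_mkcond [RHS]big_mkcond /=; apply: eq_bigr => z _.
  by rewrite !inE; case: (z \in Z); case: (p z).
under eq_bigr => x _ do rewrite card_sum.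
by rewrite exchange_big /=; apply: eq_bigr => y _; rewrite card_sum.
Qed.

Lemma cards_sepC (T : finType) (A : {set T}) (p : pred T) :
  #|[set x in A | p x]| + #|[set x in A | ~~ p x]| = #|A|.
Proof.
rewrite -(cardsID [set x | p x] A); congr (_ + _); apply: eq_card => x;
  by rewrite !inE andbC.
Qed.

Lemma partitionU (T : finType) (P1 P2 : {set {set T}}) (D1 D2 : {set T}) :
  partition P1 D1 -> partition P2 D2 -> [disjoint D1 & D2] ->
  partition (P1 :|: P2) (D1 :|: D2).
Proof.
move=> pP1 pP2 dD; apply/and3P; split.
- by rewrite -(cover_partition pP1) -(cover_partition pP2) /cover bigcup_setU.
- by apply: trivIsetU; rewrite ?(partition_trivIset pP1) ?(partition_trivIset pP2)
    ?(cover_partition pP1) ?(cover_partition pP2).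
- by rewrite inE (partition0 pP1) (partition0 pP2).
Qed.

Lemma partition_set1 (T : finType) (D : {set T}) :
  partition [set [set x] | x in D] D.
Proof.
have [triv _] : trivIset [set [set x] | x in D] /\ {in D &, injective set1}.
  apply: trivIimset => [x y _ _ yx|]; first by rewrite disjoints1 inE eq_sym.
  by apply/imsetP => -[x _ /setP /(_ x)]; rewrite !inE eqxx.
apply/and3P; split => //.
  by rewrite cover_imset; apply/eqP/setP => x; apply/bigcupP/idP =>
    [[y yD]|xD]; [rewrite inE => /eqP -> | exists x; rewrite ?inE].
by apply/imsetP => -[x _ /setP /(_ x)]; rewrite !inE eqxx.
Qed.

Lemma partition_attach (T : finType) (P : {set {set T}}) (W X : {set T})
    (f : T -> {set T}) :
  partition P W -> [disjoint X & W] -> {in X &, injective f} -> f @: X = P ->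
  partition [set x |: f x | x in X] (X :|: W).
Proof.
move=> pP dXW finj fXP.
have fW x : x \in X -> f x \subset W.
  by move=> xX; apply: partitionS pP _; rewrite -fXP imset_f.
have notin_f x y : x \in X -> y \in X -> x \notin f y.
  by move=> xX yX; apply: contraL xX => /(subsetP (fW y yX)) /(disjointFl dXW) ->.
have [triv _] : trivIset [set x |: f x | x in X] /\
                {in X &, injective (fun x => x |: f x)}.
  apply: trivIimset => [x y xX yX yx|].
    have dfxy : [disjoint f x & f y].
      have /trivIsetP := partition_trivIset pP; apply; rewrite -?fXP ?imset_f //.
      by apply: contra yx => /eqP /finj -> .
    rewrite -setI_eq0; apply/eqP/setP => v; rewrite !inE.
    apply/negP => /andP [/predU1P [->|vfx] /predU1P [vy|vfy]].
    - by move: yx; rewrite vy eqxx.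
    - by move: (notin_f x y xX yX); rewrite vfy.
    - by move: (notin_f y x yX xX); rewrite -vy vfx.
    - by rewrite (disjointFr dfxy vfx) in vfy.
  by apply/imsetP => -[x _ /setP /(_ x)]; rewrite !inE eqxx.
apply/and3P; split => //.
  rewrite cover_imset -(cover_partition pP) -fXP cover_imset.
  apply/eqP/setP => v; rewrite inE; apply/bigcupP/orP => [[x xX]|].
    by move=> /setU1P [->|vf]; [left|right; apply/bigcupP; exists x].
  case=> [vX|/bigcupP [x xX vf]]; first by exists v; rewrite ?setU11.
  by exists x; rewrite ?inE ?vf ?orbT.
by apply/imsetP => -[x _ /setP /(_ x)]; rewrite !inE eqxx.
Qed.

Section DegreeMatching.
Variables (T1 T2 : finType) (X : {set T1}) (Y : {set T2}) (r : T1 -> T2 -> bool).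

Definition partial_matching (D : {set T1}) (f : T1 -> T2) :=
  [/\ D \subset X, {in D &, injective f}, {in D, forall x, f x \in Y}
    & {in D, forall x, r x (f x)}].

Lemma partial_matching_set D f x y :
  partial_matching D f -> x \in X -> y \in Y -> r x y -> y \notin f @: (D :\ x) ->
  partial_matching (x |: D) (fun z => if z == x then y else f z).
Proof.
move=> [/subsetP DX finj fY fr] xX yY rxy yfD; split.
- by apply/subsetP => z /setU1P [->|/DX].
- have fD z : z \in D -> z != x -> f z != y.
    by move=> zD zx; apply: contra yfD => /eqP <-; rewrite imset_f // !inE zx.
  move=> z1 z2 /setU1P [->|z1D] /setU1P [->|z2D]; rewrite ?eqxx //.
  + by case: eqP => [-> //|/eqP z2x /esym/eqP]; rewrite (negbTE (fD _ z2D z2x)).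
  + by case: eqP => [-> //|/eqP z1x /eqP]; rewrite (negbTE (fD _ z1D z1x)).
  + case: eqP => [->|/eqP z1x]; case: eqP => [-> //|/eqP z2x].
    * by move/esym/eqP; rewrite (negbTE (fD _ z2D z2x)).
    * by move/eqP; rewrite (negbTE (fD _ z1D z1x)).
    * exact: finj.
- by move=> z /setU1P [->|zD]; [rewrite eqxx | case: eqP => // _; apply: fY].
- by move=> z /setU1P [->|zD]; [rewrite eqxx | case: eqP => [->|_]; last apply: fr].
Qed.

Hypothesis degree : forall x y, x \in X -> y \in Y ->
  #|[set x' in X | ~~ r x' y]| <= #|[set y' in Y | r x y']|.

(* If neither holds, x0 and the partners of its neighbours are non-neighbours of
   y0, one more than x0 has neighbours, against [degree]. *)
Lemma short_augmenting_path D f x0 y0 :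
  partial_matching D f -> x0 \in X :\: D -> y0 \in Y :\: f @: D ->
  (exists2 y, y \in Y :\: f @: D & r x0 y) \/
  (exists2 x1, x1 \in D & r x0 (f x1) && r x1 y0).
Proof.
move=> [/subsetP DX _ _ _] /setDP [x0X x0D] /setDP [y0Y y0fD].
case: (boolP [exists y in Y :\: f @: D, r x0 y]) => [/exists_inP|]; first by left.
move=> /exists_inP noFree.
case: (boolP [exists x1 in D, r x0 (f x1) && r x1 y0]) => [/exists_inP|].
  by right.
move=> /exists_inP noSwap.
pose Q := [set x1 in D | r x0 (f x1)].
have nbr_x0 : #|[set y in Y | r x0 y]| <= #|Q|.
  apply: leq_trans (leq_imset_card f Q); apply: subset_leq_card.
  apply/subsetP => y; rewrite inE => /andP [yY rxy].
  have /imsetP [x1 x1D yfx1] : y \in f @: D.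
    by apply: contraT => yfD; exfalso; apply: noFree; exists y; rewrite // inE yfD.
  by rewrite yfx1 imset_f // inE x1D -yfx1.
have nonnbr_y0 : x0 |: Q \subset [set x in X | ~~ r x y0].
  apply/subsetP => x /setU1P [->|]; rewrite inE.
    rewrite x0X; apply/negP => rxy.
    by apply: noFree; exists y0; rewrite // inE y0fD.
  rewrite inE => /andP [xD rx]; rewrite DX //=.
  by apply/negP => rxy; apply: noSwap; exists x; rewrite // rx.
have := leq_trans (subset_leq_card nonnbr_y0) (degree x0X y0Y).
rewrite cardsU1 inE (negbTE x0D) /= add1n => /leq_trans/(_ nbr_x0).
by rewrite ltnn.
Qed.

Lemma partial_matching_augment D f :
  partial_matching D f -> #|D| < #|X| -> #|X| = #|Y| ->
  exists D' f', partial_matching D' f' /\ #|D'| = #|D|.+1.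
Proof.
move=> mDf ltDX eXY; have [DX finj fY _] := mDf.
have [x0 x0XD] : exists x0, x0 \in X :\: D.
  by apply/set0Pn; rewrite -card_gt0 cardsD (setIidPr DX) subn_gt0.
have [y0 y0YfD] : exists y0, y0 \in Y :\: f @: D.
  apply/set0Pn; rewrite -card_gt0 cardsD subn_gt0 -eXY.
  by rewrite (leq_ltn_trans (subset_leq_card (subsetIr _ _))) // card_in_imset.
have [x0X x0D] := setDP x0XD; have [y0Y y0fD] := setDP y0YfD.
have not_fD (D' : {set T1}) (g : T1 -> T2) y :
    y \notin g @: D' -> y \notin g @: (D' :\ x0).
  by apply: contra; apply/subsetP/imsetS/subD1set.
have card_x0D : #|x0 |: D| = #|D|.+1 by rewrite cardsU1 x0D.
case: (short_augmenting_path mDf x0XD y0YfD) => [[y /setDP [yY yfD] rxy]|].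
  exists (x0 |: D), (fun z => if z == x0 then y else f z); split=> //.
  exact: partial_matching_set (not_fD _ _ _ yfD).
move=> [x1 x1D /andP [rx0 rx1]].
pose g z := if z == x1 then y0 else f z.
have mDg : partial_matching D g.
  rewrite -(setUidPr (_ : [set x1] \subset D)) ?sub1set //.
  apply: partial_matching_set => //; first exact: (subsetP DX).
  by apply: contra y0fD; apply/subsetP/imsetS/subD1set.
exists (x0 |: D), (fun z => if z == x0 then f x1 else g z); split=> //.
apply: partial_matching_set (not_fD _ _ _ _) => //; first by rewrite fY.
apply/imsetP => -[z zD]; rewrite /g; case: eqP => [_ fx1|/eqP zx1 /finj].
  by move: y0fD; rewrite -fx1 imset_f.
by move=> /(_ x1D zD) zx; move: zx1; rewrite zx eqxx.
Qed.

(* [dflt] only makes [f] total when [X] is empty. *)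
Lemma degree_matching (dflt : T2) : #|X| = #|Y| ->
  exists f : T1 -> T2,
    [/\ {in X &, injective f}, f @: X = Y & {in X, forall x, r x (f x)}].
Proof.
move=> eXY.
have [D [f [[DX finj fY fr] cD]]] :
    exists D f, partial_matching D f /\ #|D| = #|X|.
  suff : forall k, k <= #|X| -> exists D f, partial_matching D f /\ #|D| = k.
    exact.
  elim=> [_|k IH ltkX].
    exists set0, (fun _ => dflt); rewrite cards0; split=> //.
    by split=> [|x y|x|x]; rewrite ?sub0set ?inE.
  have [D [f [mDf cD]]] := IH (ltnW ltkX).
  by rewrite -cD in ltkX *; exact: partial_matching_augment mDf ltkX eXY.
have eDX : D = X by apply/eqP; rewrite eqEcard DX cD leqnn.
subst D; exists f; split=> //.
apply/eqP; rewrite eqEcard -eXY card_in_imset // leqnn andbT.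
by apply/subsetP => _ /imsetP [x xX ->]; apply: fY.
Qed.

End DegreeMatching.

Section CliqueFactor.
Variables (T : finType) (g : rel T).

Definition clique (B : {set T}) := {in B &, forall u v, u != v -> g u v}.

Definition adj_all x (B : {set T}) := [forall b in B, g x b].

Definition clique_factor (P : {set {set T}}) (W : {set T}) j :=
  partition P W /\ {in P, forall B : {set T}, #|B| = j /\ clique B}.

Variables (S : {set T}) (k : nat).
Hypothesis gsym : symmetric g.
Hypothesis few_nonadj :
  {in S, forall v, 4 * #|[set u in S | (u != v) && ~~ g v u]| <= k}.

Lemma few_nonadj_to_block (X B : {set T}) :
  X \subset S -> B \subset S -> [disjoint X & B] ->
  4 * #|[set x in X | ~~ adj_all x B]| <= #|B| * k.
Proof.
move=> /subsetP XS /subsetP BS dXB.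
have sub : [set x in X | ~~ adj_all x B] \subset
    \bigcup_(b in B) [set u in S | (u != b) && ~~ g b u].
  apply/subsetP => x; rewrite inE => /andP [xX /forall_inPn [b bB ngxb]].
  apply/bigcupP; exists b; rewrite // inE XS //= gsym ngxb andbT.
  by apply: contraTneq bB => <-; rewrite (disjointFr dXB xX).
rewrite -sum_nat_const (leq_trans (leq_mul (leqnn 4) (subset_leq_card sub))) //.
rewrite (leq_trans (leq_mul (leqnn 4) (leq_card_bigcup _ _))) // big_distrr.
by apply: leq_sum => b bB; apply: few_nonadj; apply: BS.
Qed.

Lemma few_nonadj_blocks (P : {set {set T}}) (W : {set T}) x :
  partition P W -> W \subset S -> x \in S -> x \notin W ->
  4 * #|[set B in P | ~~ adj_all x B]| <= k.
Proof.
move=> pP /subsetP WS xS xW.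
have sub : [set B in P | ~~ adj_all x B] \subset
    pblock P @: [set u in S | (u != x) && ~~ g x u].
  apply/subsetP => B; rewrite inE => /andP [BP /forall_inPn [b bB ngxb]].
  have bW : b \in W by apply: (subsetP (partitionS pP BP)).
  apply/imsetP; exists b; last first.
    by rewrite (def_pblock (partition_trivIset pP) BP bB).
  by rewrite inE WS //= ngxb andbT; apply: contraNneq xW => <-.
apply: leq_trans (few_nonadj xS).
by rewrite leq_mul2l (leq_trans (subset_leq_card sub)) ?leq_imset_card ?orbT.
Qed.

Lemma clique_factor_extend (W : {set T}) (P : {set {set T}}) j :
  W \subset S -> 0 < j < 3 -> #|W| = j * k -> j.+1 * k <= #|S| ->
  clique_factor P W j ->
  exists (W' : {set T}) P',
    [/\ W' \subset S, #|W'| = j.+1 * k & clique_factor P' W' j.+1].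
Proof.
move=> WS /andP [j_gt0 j_lt3] cW cS [pP cliqueP].
have [X /subsetDP [XS dXW] cX] : exists2 X : {set T}, X \subset S :\: W & #|X| = k.
  by apply: subset_of_card; rewrite cardsD (setIidPr WS) cW; lia.
have cardP : {in P, forall B : {set T}, #|B| = j} by move=> B /cliqueP [].
have cP : #|P| = k.
  have := card_uniform_partition cardP pP.
  by rewrite cW mulnC => /eqP; rewrite eqn_pmul2r // => /eqP.
have [f [finj fXP adj_f]] : exists f : T -> {set T},
    [/\ {in X &, injective f}, f @: X = P & {in X, forall x, adj_all x (f x)}].
  apply: (@degree_matching _ _ X P adj_all _ set0); last by rewrite cX cP.
  move=> x B xX BP.
  have BS : B \subset S := subset_trans (partitionS pP BP) WS.
  have dXB : [disjoint X & B] := disjointWr (partitionS pP BP) dXW.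
  have := few_nonadj_to_block XS BS dXB; rewrite (cardP B BP).
  have xS := subsetP XS x xX.
  have := few_nonadj_blocks pP WS xS (negbT (disjointFr dXW xX)).
  (* B rules out at most jk/4 vertices of X, x misses at most k/4 blocks,
     and j <= 2. *)
  have : j * k <= 2 * k by rewrite leq_mul2r -ltnS j_lt3 orbT.
  have := cards_sepC P (adj_all x); lia.
have fP x : x \in X -> f x \in P by move=> xX; rewrite -fXP imset_f.
exists (X :|: W), [set x |: f x | x in X]; split.
- by rewrite subUset XS WS.
- by rewrite cardsU (disjoint_setI0 dXW) cards0 cX cW; lia.
split; first exact: partition_attach pP dXW finj fXP.
move=> _ /imsetP [x xX ->].
have [cfx clfx] := cliqueP (f x) (fP x xX).
have xfx : x \notin f x.
  apply/negP => /(subsetP (partitionS pP (fP x xX))).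
  by rewrite (disjointFr dXW xX).
split; first by rewrite cardsU1 xfx cfx add1n.
have adj u : u \in f x -> g x u by move=> ufx; apply: (forall_inP (adj_f x xX)).
move=> u v /setU1P [->|ufx] /setU1P [->|vfx]; rewrite ?eqxx // => uv.
- exact: adj.
- by rewrite gsym adj.
- exact: clfx.
Qed.

Lemma triangle_factor : #|S| = 3 * k -> exists P, clique_factor P S 3.
Proof.
move=> cS.
have [L LS cL] : exists2 L : {set T}, L \subset S & #|L| = k.
  by apply: subset_of_card; lia.
have cf1 : clique_factor [set [set x] | x in L] L 1.
  split; first exact: partition_set1.
  move=> _ /imsetP [x _ ->]; split; first exact: cards1.
  by move=> u v /set1P -> /set1P ->; rewrite eqxx.
have cL1 : #|L| = 1 * k by rewrite mul1n.
have le2S : 2 * k <= #|S| by rewrite cS leq_mul2r orbT.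
have [M [PM [MS cM cfM]]] := clique_factor_extend (j := 1) LS isT cL1 le2S cf1.
have le3S : 3 * k <= #|S| by rewrite cS.
have [W [PW [WS cW cfW]]] := clique_factor_extend (j := 2) MS isT cM le3S cfM.
have <- : W = S by apply/eqP; rewrite eqEcard WS cS cW leqnn.
by exists PW.
Qed.

End CliqueFactor.

Section Cones.
Variables (V : finType) (H : {set {set V}}).

Definition cone x (T : {set V}) := [forall v in T, x |: (T :\ v) \in H].

Lemma K4minus_cone x (T : {set V}) :
  #|T| = 3 -> x \notin T -> cone x T -> spans_K4minus H (x |: T).
Proof.
move=> cT xT /forall_inP coneT; rewrite /spans_K4minus cardsU1 xT cT /=.
have inj : {in T &, injective (fun v => x |: (T :\ v))}.
  move=> v w vT wT /setP /(_ w); rewrite !inE eqxx wT.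
  have -> : (w == x) = false by apply: contraNF xT => /eqP <-.
  by rewrite /= andbT => /negbFE /eqP.
rewrite -{1}cT -(card_in_imset inj) subset_leq_card //.
apply/subsetP => _ /imsetP [v vT ->]; rewrite inE coneT //=.
by rewrite setUS // subD1set.
Qed.

Lemma K4minus_factor_attach (X : {set V}) (P : {set {set V}}) (f : V -> {set V}) :
  partition P (~: X) -> {in P, forall T : {set V}, #|T| = 3} ->
  {in X &, injective f} -> f @: X = P -> {in X, forall x, cone x (f x)} ->
  has_K4minus_factor H.
Proof.
move=> pP cP finj fXP cone_f.
exists [set x |: f x | x in X]; split.
  rewrite -(setUCr X); apply: partition_attach pP _ finj fXP.
  by rewrite -subsets_disjoint.
move=> _ /imsetP [x xX ->].
have fP : f x \in P by rewrite -fXP imset_f.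
apply: K4minus_cone; rewrite ?cP ?cone_f //.
by apply: contraL xX => /(subsetP (partitionS pP fP)); rewrite inE.
Qed.

End Cones.

Section Apexes.
Variables (V : finType) (A : {set V}) (H : {set {set V}}) (m : nat).

Definition missing_apexes (D : {set V}) :=
  [set a in A | (a \notin D) && (a |: D \notin H)].

Definition good_pair u w := 4 * #|missing_apexes [set u; w]| <= m.

Lemma good_pair_sym : symmetric good_pair.
Proof. by move=> u w; rewrite /good_pair setUC. Qed.

Lemma few_noncone (T Xs : {set V}) :
  #|T| = 3 -> clique good_pair T -> Xs \subset A -> [disjoint Xs & T] ->
  4 * #|[set a in Xs | ~~ cone H a T]| <= 3 * m.
Proof.
move=> cT clT /subsetP XsA dXsT.
have sub : [set a in Xs | ~~ cone H a T] \subset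
    \bigcup_(v in T) missing_apexes (T :\ v).
  apply/subsetP => a; rewrite inE => /andP [aXs /forall_inPn [v vT aTv]].
  apply/bigcupP; exists v; rewrite // inE XsA //= aTv andbT.
  by apply/negP => /setD1P [_]; rewrite (disjointFr dXsT aXs).
have good v : v \in T -> 4 * #|missing_apexes (T :\ v)| <= m.
  move=> vT; have /cards2P [u [w [uw Tv]]] : #|T :\ v| == 2.
    by move: cT; rewrite (cardsD1 v) vT add1n => -[->].
  have [uT wT] : u \in T /\ w \in T.
    by split; apply: (subsetP (subD1set T v)); rewrite Tv !inE eqxx ?orbT.
  by rewrite Tv; exact: clT u w uT wT uw.
rewrite (leq_trans (leq_mul (leqnn 4) (subset_leq_card sub))) //.
rewrite (leq_trans (leq_mul (leqnn 4) (leq_card_bigcup _ _))) // big_distrr.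
by rewrite (leq_trans (leq_sum _ good)) // sum_nat_const cT.
Qed.

Lemma many_cones (X T : {set V}) (PB P : {set {set V}}) x :
  X \subset A -> PB \subset P -> #|PB| = 2 * m ->
  #|[set T' in PB | ~~ cone H x T']| <= m ->
  #|T| = 3 -> clique good_pair T -> [disjoint X & T] ->
  #|[set x' in X | ~~ cone H x' T]| <= #|[set T' in P | cone H x T']|.
Proof.
move=> XA PBP cPB fewB cT clT dXT.
have := few_noncone cT clT XA dXT.
have : #|[set T' in PB | cone H x T']| <= #|[set T' in P | cone H x T']|.
  apply: subset_leq_card; apply/subsetP => T'; rewrite !inE => /andP [TPB ->].
  by rewrite (subsetP PBP).
have := cards_sepC PB (cone H x); lia.
Qed.

Lemma K4minus_factor_of_cones (X : {set V}) (PB P : {set {set V}}) :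
  X \subset A -> PB \subset P -> #|PB| = 2 * m ->
  {in X, forall x, #|[set T in PB | ~~ cone H x T]| <= m} ->
  clique_factor good_pair P (~: X) 3 -> #|X| = #|P| ->
  has_K4minus_factor H.
Proof.
move=> XA PBP cPB fewB [pP trP] cXP.
have [f [finj fXP cone_f]] : exists f : V -> {set V},
    [/\ {in X &, injective f}, f @: X = P & {in X, forall x, cone H x (f x)}].
  apply: (@degree_matching _ _ X P (cone H) _ set0 cXP) => x T xX TP.
  have [cT clT] := trP T TP.
  apply: many_cones XA PBP cPB (fewB x xX) cT clT _.
  by rewrite disjoint_sym -[X]setCK -subsets_disjoint (partitionS pP TP).
exact: K4minus_factor_attach pP (fun T TP => (trP T TP).1) finj fXP cone_f.
Qed.

End Apexes.

Section MissingEdges.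
Variables (V : finType) (A B : {set V}) (H : {set {set V}}) (m : nat).
Hypothesis dAB : [disjoint A & B].
Hypothesis UAB : A :|: B = [set: V].

Definition missing_edges v := [set e in BAB A B | (v \in e) && (e \notin H)].

Lemma apex_BAB a t u :
  a \in A -> a \notin [set t; u] -> t != u -> (t \in A) = (u \in A) ->
  a |: [set t; u] \in BAB A B.
Proof.
move=> aA atu tu tuA; rewrite inE UAB subsetT cardsU1 atu cards2 tu /=.
case tA: (t \in A) in tuA *.
  have eA : a |: [set t; u] \subset A.
    by apply/subsetP => z; rewrite !inE => /or3P [] /eqP ->; rewrite -?tuA.
  by rewrite (setIidPl eA) cardsU1 atu cards2 tu.
suff -> : (a |: [set t; u]) :&: A = [set a] by rewrite cards1.
apply/setP => z; rewrite !inE; case: eqP => [->|_]; rewrite ?aA //=.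
by case: eqP => [->|_]; case: eqP => [->|_]; rewrite ?tA -?tuA ?tA ?andbF.
Qed.

Lemma few_bad_apexes (PB : {set {set V}}) :
  #|B| = 6 * m -> clique_factor (good_pair A H m) PB B 3 ->
  #|[set a in A | m < #|[set T in PB | ~~ cone H a T]|]| <= 3 * m.
Proof.
move=> cB [pPB trPB].
set bad := [set a in A | _]; set f := fun a => #|[set T in PB | ~~ cone H a T]|.
have cPB : #|PB| = 2 * m.
  have := card_uniform_partition (fun T TP => (trPB T TP).1) pPB.
  by rewrite cB; lia.
have ub : 4 * \sum_(a in A) f a <= 2 * m * (3 * m).
  rewrite /f sum_card_exchange big_distrr -cPB -sum_nat_const leq_sum // => T TP.
  have [cT clT] := trPB T TP.
  exact: few_noncone cT clT (subxx A) (disjointWr (partitionS pPB TP) dAB).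
have lb : #|bad| * m.+1 <= \sum_(a in A) f a.
  have badA : bad \subset A by apply/subsetP => a; rewrite inE => /andP [].
  rewrite -sum_nat_const [X in _ <= X](big_setID bad) /= (setIidPr badA).
  rewrite (leq_trans _ (leq_addr _ _)) //.
  by apply: leq_sum => a; rewrite inE => /andP [].
nia.
Qed.

Lemma apex_pairs_le (S U : {set V}) t :
  (S \subset A) || (S \subset B) -> t \in S -> U \subset S :\ t ->
  \sum_(u in U) #|missing_apexes A H [set t; u]| <= 2 * #|missing_edges t|.
Proof.
move=> side tS /subsetP US.
pose F (p : V * V) := (p.2 |: [set t; p.1], p.1).
pose Q := [set p : V * V |
  (p.1 \in U) && (p.2 \in missing_apexes A H [set t; p.1])].
pose C := [set p : {set V} * V |
  (p.1 \in missing_edges t) && (p.2 \in p.1 :\ t)].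
have sameA u : u \in S -> (t \in A) = (u \in A).
  move=> uS; case/orP: side => /subsetP sub; first by rewrite !sub.
  by rewrite (disjointFl dAB (sub t tS)) (disjointFl dAB (sub u uS)).
have FC : {in Q, forall p, F p \in C}.
  move=> [u a] /[!inE] /= /andP [uU /and3P [aA atu aH]].
  have /setD1P [ut uS] := US u uU; have tu : t != u by rewrite eq_sym.
  have {}atu : a \notin [set t; u] by rewrite !inE.
  apply/andP; split; last by rewrite ut eqxx !orbT.
  have := apex_BAB aA atu tu (sameA u uS); rewrite inE => ->.
  by rewrite aH eqxx !orbT.
(* The edge and u determine a: each missing edge through t is hit at most twice. *)
have Finj : {in Q &, injective F}.
  move=> [u a] [u' a'] /[!inE] /= /andP [_ /and3P [_ atu _]] _ [e eu]; subst u'.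
  have : a \in a' |: [set t; u] by rewrite -e setU11.
  by rewrite !inE (negbTE atu) orbF => /eqP ->.
have cC : #|C| = 2 * #|missing_edges t|.
  rewrite (card_sigma _ (fun e => e :\ t)) mulnC -sum_nat_const.
  apply: eq_bigr => e; rewrite !inE => /andP [/and3P [_ /eqP ce _] /andP [te _]].
  by move: ce; rewrite (cardsD1 t) te add1n => -[].
rewrite -(card_sigma U (fun u => missing_apexes A H [set t; u])) -/Q -cC.
rewrite -(card_in_imset Finj) subset_leq_card //.
by apply/subsetP => _ /imsetP [p /FC pC ->].
Qed.

(* What alpha < 10^-5 gives when |V| = 12m: 10^5 |missing_edges v| <= 144 m^2. *)
Hypothesis few_missing : forall v, 500 * #|missing_edges v| <= m ^ 2.

Lemma few_bad_partners (S : {set V}) t :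
  (S \subset A) || (S \subset B) -> t \in S ->
  4 * #|[set u in S | (u != t) && ~~ good_pair A H m t u]| <= m.
Proof.
move=> side tS; set bad := [set u in S | _].
have badS : bad \subset S :\ t.
  by apply/subsetP => u; rewrite !inE => /and3P [-> -> _].
have := apex_pairs_le side tS badS; have := few_missing t.
have : #|bad| * m.+1 <= 4 * \sum_(u in bad) #|missing_apexes A H [set t; u]|.
  rewrite -sum_nat_const big_distrr leq_sum // => u.
  by rewrite inE => /and3P [_ _]; rewrite /good_pair -ltnNge.
set b := #|bad|; set M := #|missing_edges t|; set q := \sum_(u in bad) _.
move=> bq fewM qM; rewrite leqNgt; apply/negP => lt.
have : m.+1 * m.+1 <= 4 * b * m.+1 by rewrite leq_mul2r lt orbT.
nia.
Qed.

Hypotheses (cA : #|A| = 6 * m) (cB : #|B| = 6 * m).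

Lemma triangle_factor_side (S : {set V}) k :
  (S \subset A) || (S \subset B) -> #|S| = 3 * k -> m <= k ->
  exists P, clique_factor (good_pair A H m) P S 3.
Proof.
move=> side cS mk; apply: triangle_factor cS; first exact: good_pair_sym.
by move=> t tS; exact: leq_trans (few_bad_partners side tS) mk.
Qed.

Theorem K4minus_factor_of_few_missing : has_K4minus_factor H.
Proof.
have sideB : (B \subset A) || (B \subset B) by rewrite subxx orbT.
have cB3 : #|B| = 3 * (2 * m) by rewrite cB mulnA.
have m2m : m <= 2 * m by rewrite leq_pmull.
have [PB [pPB trPB]] := triangle_factor_side sideB cB3 m2m.
have cPB : #|PB| = 2 * m.
  have := card_uniform_partition (fun T TP => (trPB T TP).1) pPB.
  by rewrite cB; lia.
set bad := [set a in A | m < #|[set T in PB | ~~ cone H a T]|].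
have [X /subsetDP [XA dXbad] cX] :
    exists2 X : {set V}, X \subset A :\: bad & #|X| = 3 * m.
  apply: subset_of_card; rewrite cardsD cA.
  have := few_bad_apexes cB (conj pPB trPB); rewrite -/bad.
  have := subset_leq_card (subsetIr A bad); lia.
have cAX : #|A :\: X| = 3 * m by rewrite cardsD (setIidPr XA) cA cX; lia.
have sideAX : (A :\: X \subset A) || (A :\: X \subset B) by rewrite subsetDl.
have [PA [pPA trPA]] := triangle_factor_side sideAX cAX (leqnn m).
have eCX : B :|: (A :\: X) = ~: X.
  apply/setP => v; rewrite !inE; have := in_setT v; rewrite -UAB inE.
  case: (boolP (v \in X)) => [/(subsetP XA) vA _|_ /=]; last by rewrite orbC.
  by rewrite vA (disjointFr dAB vA).
pose P := PB :|: PA.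
have pP : partition P (~: X).
  rewrite -eCX; apply: partitionU pPB pPA _.
  by apply: disjointWr (subsetDl A X) _; rewrite disjoint_sym.
have trP : {in P, forall T : {set V}, #|T| = 3 /\ clique (good_pair A H m) T}.
  by move=> T /setUP [/trPB|/trPA].
have cP : #|P| = 3 * m.
  have := card_uniform_partition (fun T TP => (trP T TP).1) pP.
  rewrite cardsCs setCK cX -cardsT -UAB cardsU (disjoint_setI0 dAB) cards0 cA cB.
  lia.
apply: (K4minus_factor_of_cones XA (subsetUl PB PA) cPB _ (conj pP trP)).
  move=> x xX; have := disjointFr dXbad xX.
  by rewrite inE (subsetP XA x xX) ltnNge => /negbFE.
by rewrite cX cP.
Qed.

End MissingEdges.

Lemma scaled_count_le (R : realFieldType) (alpha : R) (N K : nat) :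
  (alpha < 1 / 10 ^+ 5)%R -> (N%:R <= alpha * K%:R)%R -> 10 ^ 5 * N <= K.
Proof.
move=> small le_NK; rewrite -(ler_nat R) natrM natrX.
have pos5 : (0 < 10 ^+ 5 :> R)%R by rewrite exprn_gt0 // ltr0n.
have small5 : (10 ^+ 5 * alpha < 1)%R by rewrite -ltr_pdivlMl // mulr1 -div1r.
apply: le_trans (ler_wpM2l (ltW pos5) le_NK) _.
by rewrite mulrA -[leRHS]mul1r ler_wpM2r ?ler0n // ltW.
Qed.

Theorem lemma6p1 (R : realFieldType) (alpha : R) :
  (0 < alpha)%R -> (alpha < 1 / 10 ^+ 5)%R ->
  exists m0 : nat, forall m : nat, m0 <= m ->
  forall (V : finType) (A B : {set V}) (H : {set {set V}}),
    is_3graph H -> [disjoint A & B] -> A :|: B = [set: V] ->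
    #|A| = 6 * m -> #|B| = 6 * m ->
    (forall v : V, alpha_good alpha H (BAB A B) v) ->
    has_K4minus_factor H.
Proof.
move=> _ small; exists 0 => m _ V A B H _ dAB UAB cA cB good.
have cV : #|V| = 12 * m.
  by rewrite -cardsT -UAB cardsU (disjoint_setI0 dAB) cards0 cA cB; lia.
apply: (K4minus_factor_of_few_missing dAB UAB _ cA cB) => v.
have := scaled_count_le small (good v); rewrite cV expnMn /missing_edges; lia.
Qed.
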